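(* There exist a finite atom set $\Phi$, a finite agent set $I$, a logic $\Lambda$, an $\boldsymbol{\mathcal{L}}_\Lambda$ modal space $\boldsymbol{X}$ and a clean map $\boldsymbol{f}$ on $\boldsymbol{X}$ induced by a finite, Boolean multi-pointed action model that is not static, such that $\boldsymbol{f}$ exhibits nontrivial recurrence (with respect to the Stone topology): there is $\boldsymbol{x}\in\boldsymbol{X}$ whose orbit $\mathcal{O}_{\boldsymbol{f}}(\boldsymbol{x})$ is not periodic and contains a recurrent point.
   Context: Setting: atom set $\Phi$, finite agent set $I$, modal language $\mathcal{L}$ ($\varphi::=\top\mid p\mid\neg\varphi\mid\varphi\wedge\varphi\mid\square_i\varphi$), logic $\Lambda$ a normal modal logic extending $K$, $\boldsymbol{\mathcal{L}}_\Lambda$ the set of $\Lambda$-equivalence classes of formulas. For a set $X$ of pointed Kripke models (countable nonempty state sets, standard semantics), the modal space is $\boldsymbol{X}=\{\boldsymbol{x}:x\in X\}$, $\boldsymbol{x}=\{y\in X:y,x\text{ satisfy the same formulas}\}$, with the Stone topology generated by the sets $\{\boldsymbol{x}:x\vDash\varphi\}$. Clean map: induced via product update $x\mapsto x\otimes\Sigma\Gamma$ by a multi-pointed action model $\Sigma\Gamma=(\llbracket\Sigma\rrbracket,\mathsf{R},pre,post,\Gamma)$ (countable action set, relations $\mathsf{R}_i$, preconditions in $\mathcal{L}$, postconditions $\top$ or conjunctions of literals over $\Phi$, designated set $\emptyset\ne\Gamma\subseteq\llbracket\Sigma\rrbracket$) that is precondition finite, exhaustive, deterministic and closing over $X$ (every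 $x\in X$ satisfies $pre(\sigma)$ for exactly one $\sigma\in\Gamma$, finitely many preconditions up to equivalence, and $x\otimes\Sigma\Gamma\in X$). Product update: states $(s,\sigma)$ with $Ms\vDash pre(\sigma)$, relations componentwise, $p$ true at $(s,\sigma)$ iff $post(\sigma)\vDash p$, or $s\in\llbracket p\rrbracket$ and $post(\sigma)\nvDash\neg p$; designated state $(s,\sigma)$ for the applicable $\sigma\in\Gamma$. $\boldsymbol{f}(\boldsymbol{x})$ is the class of $x\otimes\Sigma\Gamma$. $\Sigma\Gamma$ is finite if $\llbracket\Sigma\rrbracket$ is finite, Boolean if every precondition is a Boolean (modality-free) formula, static if every postcondition is $\top$. Orbit: $\mathcal{O}_{\boldsymbol{f}}(\boldsymbol{x})=\{\boldsymbol{f}^n(\boldsymbol{x}):n\in\mathbb{N}_0\}$; it is periodic if $\boldsymbol{f}^{n+k}(\boldsymbol{x})=\boldsymbol{f}^n(\boldsymbol{x})$ for some $n\ge0,k>0$. The limit set $\omega_{\boldsymbol{f}}(\boldsymbol{y})$ is the set of limits of convergent subsequences $\boldsymbol{f}^{n_1}(\boldsymbol{y}),\boldsymbol{f}^{n_2}(\boldsymbol{y}),\dots$ ($n_1<n_2<\cdots$); $\boldsymbol{y}$ is recurrent if $\boldsymbol{y}\in\omega_{\boldsymbol{f}}(\boldsymbol{y})$. *)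

From Stdlib Require Import List Arith.
Import ListNotations.
Set Implicit Arguments.

Section Modal.
Variables (A : Type) (G : Type) .

Inductive form : Type :=
| FTop : form
| FAtom : A -> form
| FNeg : form -> form
| FAnd : form -> form -> form
| FBox : G -> form -> form.

Definition FImp (p q : form) : form := FNeg (FAnd p (FNeg q)).
Definition FIff (p q : form) : form := FAnd (FImp p q) (FImp q p).

Fixpoint boolean_form (p : form) : Prop :=
  match p with
  | FTop => True
  | FAtom _ => True
  | FNeg q => boolean_form q
  | FAnd q r => boolean_form q /\ boolean_form r
  | FBox _ _ => False
  end.

Fixpoint subst (s : A -> form) (p : form) : form :=
  match p with
  | FTop => FTop
  | FAtom a => s a
  | FNeg q => FNeg (subst s q)
  | FAnd q r => FAnd (subst s q) (subst s r)
  | FBox i q => FBox i (subst s q)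
  end.

(** Propositional tautologies: atoms and boxed formulas treated as
    propositional variables. *)
Fixpoint tval (v : form -> bool) (p : form) : bool :=
  match p with
  | FTop => true
  | FAtom a => v (FAtom a)
  | FNeg q => negb (tval v q)
  | FAnd q r => andb (tval v q) (tval v r)
  | FBox i q => v (FBox i q)
  end.

Definition tautology (p : form) : Prop := forall v, tval v p = true.

Definition normal_logic (L : form -> Prop) : Prop :=
  (forall p, tautology p -> L p) /\
  (forall i p q, L (FImp (FBox i (FImp p q)) (FImp (FBox i p) (FBox i q)))) /\
  (forall p q, L p -> L (FImp p q) -> L q) /\
  (forall i p, L p -> L (FBox i p)) /\
  (forall s p, L p -> L (subst s p)).

Record kmodel : Type := KModel {
  kst : Type;
  krel : G -> kst -> kst -> Prop;
  kval : A -> kst -> Prop }.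

Record pmodel : Type := PModel {
  pm_model : kmodel;
  pm_point : kst pm_model }.

Fixpoint sat (M : kmodel) (s : kst M) (p : form) : Prop :=
  match p with
  | FTop => True
  | FAtom a => kval M a s
  | FNeg q => ~ sat M s q
  | FAnd q r => sat M s q /\ sat M s r
  | FBox i q => forall t, krel M i s t -> sat M t q
  end.

Definition psat (x : pmodel) (p : form) : Prop := sat (pm_model x) (pm_point x) p.

Definition countable_type (T : Type) : Prop :=
  exists e : T -> nat, forall a b, e a = e b -> a = b.

Definition finite_type (T : Type) : Prop := exists l : list T, forall a, In a l.

(** An L_Lambda modal space: a set X of pointed Kripke models with countable
    (nonempty, via the point) state sets, each satisfying every formula of Lambda. *)
Definition modal_space (L : form -> Prop) (X : pmodel -> Prop) : Prop :=
  forall x, X x -> countable_type (kst (pm_model x)) /\ (forall p, L p -> psat x p).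

(** Modal equivalence: x and y represent the same point of the modal space. *)
Definition meq (x y : pmodel) : Prop := forall p, psat x p <-> psat y p.

(** Multi-pointed action models.  A postcondition is a list of literals
    (atom, polarity), read as their conjunction; the empty list is Top. *)
Record action_model : Type := AModel {
  act : Type;
  arel : G -> act -> act -> Prop;
  pre : act -> form;
  post : act -> list (A * bool);
  desig : act -> Prop }.

Definition post_entails (ps : list (A * bool)) (a : A) (b : bool) : Prop :=
  forall v : A -> bool, (forall l, In l ps -> v (fst l) = snd l) -> v a = b.

Definition am_finite (S : action_model) : Prop := finite_type (act S).
Definition am_boolean (S : action_model) : Prop := forall s, boolean_form (pre S s).
Definition am_static (S : action_model) : Prop := forall s, post S s = [].

Definition upd_model (M : kmodel) (S : action_model) : kmodel :=
  {| kst := { q : kst M * act S | sat M (fst q) (pre S (snd q)) };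
     krel := fun i u w =>
       krel M i (fst (proj1_sig u)) (fst (proj1_sig w)) /\
       arel S i (snd (proj1_sig u)) (snd (proj1_sig w));
     kval := fun a u =>
       post_entails (post S (snd (proj1_sig u))) a true \/
       (kval M a (fst (proj1_sig u)) /\
        ~ post_entails (post S (snd (proj1_sig u))) a false) |}.

Definition upd_at (x : pmodel) (S : action_model) (s : act S)
  (H : psat x (pre S s)) : pmodel :=
  {| pm_model := upd_model (pm_model x) S;
     pm_point := exist (fun q : kst (pm_model x) * act S =>
                          sat (pm_model x) (fst q) (pre S (snd q)))
                       (pm_point x, s) H |}.

Definition is_update (S : action_model) (x y : pmodel) : Prop :=
  exists s (Hd : desig S s) (H : psat x (pre S s)), y = upd_at x S s H.

Definition precondition_finite (L : form -> Prop) (S : action_model) : Prop :=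
  exists l : list form, forall s, exists q, In q l /\ L (FIff (pre S s) q).

Definition exhaustive_deterministic (X : pmodel -> Prop) (S : action_model) : Prop :=
  forall x, X x ->
    exists s, desig S s /\ psat x (pre S s) /\
      (forall s', desig S s' -> psat x (pre S s') -> s' = s).

(** f : pmodel -> pmodel is (on representatives in X) the clean map induced by S,
    and S is closing over X. *)
Definition clean_map_by (L : form -> Prop) (X : pmodel -> Prop) (S : action_model)
  (f : pmodel -> pmodel) : Prop :=
  (exists s, desig S s) /\
  countable_type (act S) /\
  precondition_finite L S /\
  exhaustive_deterministic X S /\
  (forall x, X x -> is_update S x (f x) /\ X (f x)).

(** Convergence in the Stone topology of the modal space (the sets
    {x | x |= p} form a base: closed under conjunction and containing Top). *)
Definition converges (u : nat -> pmodel) (z : pmodel) : Prop :=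
  forall p, psat z p -> exists N, forall n, N <= n -> psat (u n) p.

Definition iterf (f : pmodel -> pmodel) (n : nat) (x : pmodel) : pmodel :=
  Nat.iter n f x.

Definition in_limit_set (f : pmodel -> pmodel) (y z : pmodel) : Prop :=
  exists nk : nat -> nat, (forall k, nk k < nk (S k)) /\
    converges (fun k => iterf f (nk k) y) z.

Definition recurrent (f : pmodel -> pmodel) (y : pmodel) : Prop := in_limit_set f y y.

Definition periodic_orbit (f : pmodel -> pmodel) (x : pmodel) : Prop :=
  exists n k, 0 < k /\ meq (iterf f (n + k) x) (iterf f n x).

End Modal.

From Stdlib Require Import List Arith Lia Bool Cantor Classical ClassicalEpsilon ProofIrrelevance.
Import ListNotations.

(* With one atom and one agent, a pointed model bisimilar to an infinite
   chain is, up to modal equivalence, the bit stream read along the chain.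
   The Boolean action model [incr_am] adds 1 to that stream read as a
   little-endian binary number, each action carrying the incoming carry and
   the current bit.  Hence the orbit of the all-false chain runs through the
   binary expansions of 0, 1, 2, ...: these are pairwise distinct, so the orbit
   is not periodic, while the expansion of 2^k agrees with that of 0 on its
   first k bits, i.e. on all formulas of modal depth below k, so the starting
   point is recurrent. *)

Fixpoint carry (n i : nat) : bool :=
  match i with 0 => true | S i => Nat.odd n && carry (Nat.div2 n) i end.

Lemma testbit_succ i n :
  Nat.testbit (S n) i = xorb (Nat.testbit n i) (carry n i).
Proof.
  revert n; induction i as [|i IHi]; intros n.
  - cbn [carry]. rewrite !Nat.bit0_odd, Nat.odd_succ, <- Nat.negb_odd.
    now destruct (Nat.odd n).
  - rewrite <- !Nat.testbit_div2. cbn [carry].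
    destruct (Nat.odd n) eqn:Hodd.
    + rewrite <- (Nat.Odd_div2 n) by now apply Nat.odd_spec. apply IHi.
    + rewrite <- (Nat.Even_div2 n) by (apply Nat.even_spec; now rewrite <- Nat.negb_odd, Hodd).
      now rewrite xorb_false_r.
Qed.

Lemma carry_succ j n : carry n (S j) = carry n j && Nat.testbit n j.
Proof.
  revert n; induction j as [|j IHj]; intros n.
  - cbn [carry]. now rewrite Nat.bit0_odd, andb_true_r.
  - change (carry n (S (S j))) with (Nat.odd n && carry (Nat.div2 n) (S j)).
    rewrite IHj, <- Nat.testbit_div2. cbn [carry]. now rewrite andb_assoc.
Qed.

Lemma testbit_pow2_below k i : i < k -> Nat.testbit (2 ^ k) i = false.
Proof. intros Hi. rewrite Nat.pow2_bits_eqb. apply Nat.eqb_neq. lia. Qed.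

Fixpoint depth {A G} (p : form A G) : nat :=
  match p with
  | FTop _ _ | FAtom _ _ => 0
  | FNeg q => depth q
  | FAnd q r => max (depth q) (depth r)
  | FBox _ q => S (depth q)
  end.

Fixpoint stream_sat (b : nat -> bool) (j : nat) (p : form unit unit) : Prop :=
  match p with
  | FTop _ _ => True
  | FAtom _ _ => b j = true
  | FNeg q => ~ stream_sat b j q
  | FAnd q r => stream_sat b j q /\ stream_sat b j r
  | FBox _ q => stream_sat b (S j) q
  end.

Lemma stream_sat_agree p j b c :
  (forall i, j <= i -> i <= j + depth p -> b i = c i) ->
  (stream_sat b j p <-> stream_sat c j p).
Proof.
  revert j; induction p as [| |p IHp|p IHp q IHq|g p IHp]; intros j H; cbn in *.
  - tauto.
  - rewrite (H j) by lia. tauto.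
  - rewrite (IHp j H). tauto.
  - rewrite (IHp j), (IHq j) by (intros; apply H; lia). tauto.
  - apply IHp. intros; apply H; lia.
Qed.

Definition boxes (i : nat) : form unit unit := Nat.iter i (FBox tt) (FAtom unit tt).

Lemma stream_sat_boxes i b j : stream_sat b j (boxes i) <-> b (j + i) = true.
Proof.
  revert j; induction i as [|i IHi]; intros j; cbn.
  - rewrite Nat.add_0_r. tauto.
  - change (stream_sat b (S j) (boxes i) <-> b (j + S i) = true).
    now rewrite IHi, Nat.add_succ_r.
Qed.

Definition stream_bisim_rel (M : kmodel unit unit) (Z : kst M -> nat -> Prop)
  (b : nat -> bool) : Prop :=
  (forall s j, Z s j -> (kval M tt s <-> b j = true)) /\
  (forall s j t, Z s j -> krel M tt s t -> Z t (S j)) /\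
  (forall s j, Z s j -> exists t, krel M tt s t /\ Z t (S j)).

Definition stream_bisim (x : pmodel unit unit) (b : nat -> bool) : Prop :=
  exists Z, stream_bisim_rel (pm_model x) Z b /\ Z (pm_point x) 0.

Lemma sat_stream_bisim M Z b :
  stream_bisim_rel M Z b ->
  forall p s j, Z s j -> (sat M s p <-> stream_sat b j p).
Proof.
  intros [Hval [Hforth Hback]] p.
  induction p as [|[]|p IHp|p IHp q IHq|[] p IHp]; intros s j HZ; cbn.
  - tauto.
  - now apply Hval.
  - rewrite (IHp s j HZ). tauto.
  - rewrite (IHp s j HZ), (IHq s j HZ). tauto.
  - split.
    + intros H. destruct (Hback s j HZ) as [t [Hst HZt]]. apply (IHp t); auto.
    + intros H t Hst. apply (IHp t (S j)); eauto.
Qed.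

Lemma psat_stream_bisim x b :
  stream_bisim x b -> forall p, psat x p <-> stream_sat b 0 p.
Proof. intros [Z [HZ H0]] p. exact (sat_stream_bisim _ _ _ HZ p _ _ H0). Qed.

(* The action [(c, b)] runs at a state with bit [b] receiving carry [c]; it
   writes [b xor c] and passes the carry [c && b] on to the successors. *)
Definition incr_am : action_model unit unit :=
  {| act := bool * bool;
     arel := fun _ u w => fst w = andb (fst u) (snd u);
     pre := fun u => if snd u then FAtom unit tt else FNeg (FAtom unit tt);
     post := fun u => [(tt, xorb (snd u) (fst u))];
     desig := fun u => fst u = true |}.

Definition incr (x : pmodel unit unit) : pmodel unit unit :=
  match excluded_middle_informative (psat x (FAtom unit tt)) with
  | left H => upd_at x incr_am (true, true) H
  | right H => upd_at x incr_am (true, false) H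
  end.

Lemma post_entails_single {A} (a : A) (b v : bool) :
  post_entails [(a, b)] a v <-> b = v.
Proof.
  split.
  - intros H. apply (H (fun _ => b)). now intros l [<-|[]].
  - intros <- w H. apply (H (a, b)). now left.
Qed.

Section IncrStep.
Variables (M : kmodel unit unit) (Z : kst M -> nat -> Prop) (n : nat).
Hypothesis HZ : stream_bisim_rel M Z (Nat.testbit n).

Definition incr_rel (u : kst (upd_model M incr_am)) (j : nat) : Prop :=
  Z (fst (proj1_sig u)) j /\ snd (proj1_sig u) = (carry n j, Nat.testbit n j).

Lemma bit_of_pre {s j} {b : bool} :
  Z s j -> sat M s (pre incr_am (true, b)) -> b = Nat.testbit n j.
Proof.
  destruct HZ as [Hval _]. intros Hs Hpre. specialize (Hval s j Hs).
  destruct b; cbn in Hpre.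
  - symmetry. now apply Hval.
  - destruct (Nat.testbit n j); [exfalso; apply Hpre; now apply Hval | reflexivity].
Qed.

Lemma incr_rel_val u j :
  incr_rel u j -> (kval (upd_model M incr_am) tt u <-> Nat.testbit (S n) j = true).
Proof.
  destruct u as [[s a] Hs]. intros [_ Ha]; cbn in *. subst a. cbn.
  rewrite testbit_succ, !post_entails_single.
  destruct (xorb (Nat.testbit n j) (carry n j)); intuition discriminate.
Qed.

Lemma incr_rel_forth u j w :
  incr_rel u j -> krel (upd_model M incr_am) tt u w -> incr_rel w (S j).
Proof.
  destruct HZ as [_ [Hforth _]].
  destruct u as [[s a] Hs], w as [[t [c b]] Ht].
  intros [Hsj Ha] [Hst Hc]; cbn in *. subst a c.
  assert (Htj : Z t (S j)) by eauto.
  split; [exact Htj|]. cbn [proj1_sig fst snd].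
  now rewrite carry_succ, (bit_of_pre Htj Ht).
Qed.

Lemma incr_rel_back u j :
  incr_rel u j -> exists w, krel (upd_model M incr_am) tt u w /\ incr_rel w (S j).
Proof.
  destruct HZ as [Hval [_ Hback]].
  destruct u as [[s a] Hs]. intros [Hsj Ha]; cbn in *. subst a.
  destruct (Hback s j Hsj) as [t [Hst Htj]].
  set (a := (carry n (S j), Nat.testbit n (S j))).
  assert (Hpre : sat M t (pre incr_am a)).
  { specialize (Hval t (S j) Htj). unfold a; cbn [pre incr_am snd].
    destruct (Nat.testbit n (S j)); cbn [sat]; [now apply Hval|].
    intros Ht. apply Hval in Ht. discriminate. }
  exists (exist (fun q => sat M (fst q) (pre incr_am (snd q))) (t, a) Hpre).
  repeat split; cbn; auto. apply carry_succ.
Qed.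

End IncrStep.

Lemma incr_stream_bisim x n :
  stream_bisim x (Nat.testbit n) -> stream_bisim (incr x) (Nat.testbit (S n)).
Proof.
  intros [Z [HZ H0]].
  assert (Hrel : stream_bisim_rel (upd_model (pm_model x) incr_am)
                   (incr_rel _ Z n) (Nat.testbit (S n))).
  { split; [|split]; intros; [eapply incr_rel_val | eapply incr_rel_forth
                             | eapply incr_rel_back]; eauto. }
  unfold incr. destruct (excluded_middle_informative _) as [H|H];
    exists (incr_rel _ Z n); split; auto; split; [exact H0| |exact H0|];
    cbn [incr_rel proj1_sig fst snd pm_point upd_at carry]; f_equal;
    now apply (bit_of_pre _ _ _ HZ H0).
Qed.

Definition valid {A G} (p : form A G) : Prop := forall (M : kmodel A G) s, sat M s p.

Lemma tval_sat {A G} (M : kmodel A G) s p :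
  tval (fun q => if excluded_middle_informative (sat M s q) then true else false) p = true
  <-> sat M s p.
Proof.
  induction p; cbn.
  - tauto.
  - destruct (excluded_middle_informative _); intuition discriminate.
  - rewrite negb_true_iff, <- not_true_iff_false. tauto.
  - rewrite andb_true_iff. tauto.
  - destruct (excluded_middle_informative _); intuition discriminate.
Qed.

Lemma sat_subst {A G} (M : kmodel A G) sg p s :
  sat M s (subst sg p) <->
  sat {| kst := kst M; krel := krel M; kval := fun a t => sat M t (sg a) |} s p.
Proof.
  revert s; induction p; intros s; cbn.
  - tauto.
  - tauto.
  - rewrite IHp. tauto.
  - rewrite IHp1, IHp2. tauto.
  - split; intros H t Ht; apply IHp; auto.
Qed.

Lemma valid_normal {A G} : normal_logic (@valid A G).
Proof.
  split; [|split; [|split; [|split]]].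
  - intros p Ht M s. apply tval_sat, Ht.
  - intros i p q M s. cbn. intros [H1 H2]. apply H2. intros [H3 H4]. apply H4.
    intros t Ht. apply NNPP. intros Hq. apply (H1 t Ht). split; auto.
  - intros p q Hp Hpq M s. specialize (Hpq M s). cbn in Hpq.
    apply NNPP. intros Hq. now apply Hpq.
  - intros i p Hp M s t _. apply Hp.
  - intros sg p Hp M s. apply sat_subst, Hp.
Qed.

Lemma upd_model_countable {A G} (M : kmodel A G) (S : action_model A G) :
  countable_type (kst M) -> countable_type (act S) ->
  countable_type (kst (upd_model M S)).
Proof.
  intros [e He] [d Hd].
  exists (fun u => to_nat (e (fst (proj1_sig u)), d (snd (proj1_sig u)))).
  intros [[s a] Hs] [[t b] Ht] H. cbn [proj1_sig fst snd] in H.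
  apply to_nat_inj in H. injection H as Hst Hab.
  apply He in Hst. apply Hd in Hab. subst.
  f_equal. apply proof_irrelevance.
Qed.

Lemma incr_am_countable : countable_type (act incr_am).
Proof.
  exists (fun u : bool * bool => (if fst u then 2 else 0) + (if snd u then 1 else 0)).
  intros [[|] [|]] [[|] [|]]; cbn; congruence.
Qed.

Lemma incr_countable x :
  countable_type (kst (pm_model x)) -> countable_type (kst (pm_model (incr x))).
Proof.
  intros H. unfold incr.
  destruct (excluded_middle_informative _); apply upd_model_countable;
    auto using incr_am_countable.
Qed.

Lemma incr_is_update x : is_update incr_am x (incr x).
Proof.
  unfold incr. destruct (excluded_middle_informative _) as [H|H];
    [exists (true, true) | exists (true, false)]; now exists eq_refl, H.
Qed.

Lemma incr_exhaustive_deterministic X : exhaustive_deterministic X incr_am.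
Proof.
  intros x _.
  destruct (excluded_middle_informative (psat x (FAtom unit tt))) as [H|H];
    [exists (true, true) | exists (true, false)];
    (split; [reflexivity|split; [exact H|]]);
    intros [c b] Hc Hb; cbn in Hc; subst c; destruct b; cbn in Hb; tauto.
Qed.

Lemma incr_precondition_finite : precondition_finite valid incr_am.
Proof.
  exists [FAtom unit tt; FNeg (FAtom unit tt)].
  intros [c b]. exists (pre incr_am (c, b)).
  split; [destruct b; cbn; tauto|]. intros M s. cbn. tauto.
Qed.

Definition zero_chain : pmodel unit unit :=
  PModel {| kst := nat; krel := fun _ i j => j = S i; kval := fun _ _ => False |} 0.

Definition incr_orbit (y : pmodel unit unit) : Prop :=
  exists n, y = iterf incr n zero_chain.

Lemma zero_chain_stream_bisim : stream_bisim zero_chain (Nat.testbit 0).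
Proof.
  exists (fun s j => s = j). split; [split; [|split]|reflexivity]; cbn.
  - intros s j ->. rewrite Nat.bits_0. split; [tauto|discriminate].
  - now intros s j t -> ->.
  - intros s j ->. now exists (S j).
Qed.

Lemma psat_incr_iter n p :
  psat (iterf incr n zero_chain) p <-> stream_sat (Nat.testbit n) 0 p.
Proof.
  apply psat_stream_bisim. induction n.
  - exact zero_chain_stream_bisim.
  - now apply incr_stream_bisim.
Qed.

Lemma incr_orbit_modal_space : modal_space valid incr_orbit.
Proof.
  intros x [n ->]. split; [|intros p Hp; apply Hp].
  induction n as [|n IHn].
  - now exists (fun k : nat => k).
  - now apply incr_countable.
Qed.

Lemma incr_clean : clean_map_by valid incr_orbit incr_am incr.
Proof.
  repeat split.
  - now exists (true, true).
  - exact incr_am_countable.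
  - exact incr_precondition_finite.
  - apply incr_exhaustive_deterministic.
  - apply incr_is_update.
  - destruct H as [n ->]. now exists (S n).
Qed.

Lemma meq_incr_iter m n :
  meq (iterf incr m zero_chain) (iterf incr n zero_chain) -> m = n.
Proof.
  intros Hmn. apply Nat.bits_inj. intros i. apply eq_true_iff_eq.
  specialize (Hmn (boxes i)).
  now rewrite !psat_incr_iter, !stream_sat_boxes in Hmn.
Qed.

Lemma zero_chain_not_periodic : ~ periodic_orbit incr zero_chain.
Proof. intros [n [k [Hk Hnk]]]. apply meq_incr_iter in Hnk. lia. Qed.

Lemma zero_chain_recurrent : recurrent incr zero_chain.
Proof.
  exists (fun k => 2 ^ k). split.
  - intros k. rewrite Nat.pow_succ_r'. pose proof (Nat.pow_nonzero 2 k). lia.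
  - intros p Hp. exists (S (depth p)). intros k Hk.
    apply (psat_incr_iter 0) in Hp. apply psat_incr_iter.
    apply (stream_sat_agree p 0 (Nat.testbit 0)); auto.
    intros i _ Hi. rewrite Nat.bits_0, testbit_pow2_below; auto. lia.
Qed.

Theorem proposition11 :
  exists (Atom Agent : Type),
    finite_type Atom /\ finite_type Agent /\
    exists (L : form Atom Agent -> Prop) (X : pmodel Atom Agent -> Prop)
           (S : action_model Atom Agent) (f : pmodel Atom Agent -> pmodel Atom Agent),
      normal_logic L /\ modal_space L X /\
      am_finite S /\ am_boolean S /\ ~ am_static S /\
      clean_map_by L X S f /\
      exists x, X x /\ ~ periodic_orbit f x /\
        exists m, recurrent f (iterf f m x).
Proof.
  assert (unit_finite : finite_type unit) by (exists [tt]; intros []; now left).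
  exists unit, unit. split; [exact unit_finite | split; [exact unit_finite|]].
  exists valid, incr_orbit, incr_am, incr.
  split; [exact valid_normal|]. split; [exact incr_orbit_modal_space|].
  split.
  { exists [(false, false); (false, true); (true, false); (true, true)].
    intros [[|] [|]]; cbn; tauto. }
  split; [intros [c [|]]; cbn; tauto|].
  split; [intros H; discriminate (H (true, true))|].
  split; [exact incr_clean|].
  exists zero_chain. split; [now exists 0|].
  split; [exact zero_chain_not_periodic|].
  exists 0. exact zero_chain_recurrent.
Qed.
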